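(* Let $G$ be a graph, let $Q\subset B\subset G$ and $x\in B$. Let $\xi$ be a random walk started at $x$ and stopped upon exiting $B$ (identified with its trace). Then for every positive integer $t$, $$\Pr[\xi\cap Q\neq\emptyset]\ge \Pr[B\subset A_t(x\mapsto B)]\cdot\frac{|Q|}{t}.$$
   Context: $G$ is a connected locally finite graph and ''random walk'' means simple random walk on $G$. IDLA with pausing: for finite $S\subset G$, $y\in G$, $T\subset G$, let $\zeta$ be a random walk started at $y$, $t_S$ the first time $\zeta\notin S$, $t_T$ the first time $\zeta\notin T$, and $A(S;y\mapsto T)=S\cup\{\zeta(t_S\wedge(t_T-1))\}$. For $y_1,\dots,y_k$ define inductively (independent walks) $S_0=S$, $S_j=A(S_{j-1};y_j\mapsto T)$, $A(S;y_1,\dots,y_k\mapsto T)=S_k$. Then $A_t(x\mapsto B)=A(\emptyset;x,\dots,x\mapsto B)$ with $t$ copies of $x$. *)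

From HB Require Import structures.
From mathcomp Require Import all_boot all_order all_algebra.
From mathcomp Require Import finmap.
From mathcomp Require Import all_classical all_reals all_analysis.

Set Implicit Arguments.
Unset Strict Implicit.
Unset Printing Implicit Defensive.

Import Order.TTheory GRing.Theory Num.Theory.

Local Open Scope ring_scope.

(* A locally finite simple graph on a vertex type V is given by its finite
   neighbour lists [adj v]. *)
Definition simple_graph (V : choiceType) (adj : V -> seq V) : Prop :=
  (forall u, uniq (adj u)) /\
  (forall u, u \notin adj u) /\
  (forall u v, (v \in adj u) = (u \in adj v)).

Definition connected_graph (V : choiceType) (adj : V -> seq V) : Prop :=
  forall u v : V, exists p : seq V,
    path (fun a b => b \in adj a) u p /\ last u p = v.

Definition srw_step (R : realType) (V : choiceType) (adj : V -> seq V)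
  (u v : V) : R :=
  if v \in adj u then (size (adj u))%:R^-1 else 0.

(* probability that the walk started at u follows the finite path u :: p
   (i.e. the probability of the corresponding cylinder event) *)
Fixpoint path_weight (R : realType) (V : choiceType) (adj : V -> seq V)
  (u : V) (p : seq V) : R :=
  match p with
  | [::] => 1
  | v :: p' => srw_step R adj u v * path_weight R adj v p'
  end.

(* The path x :: p is the initial segment of the walk up to the first visit
   to Q, all earlier positions lying in B \ Q (so before exiting B). *)
Definition first_hit_path (V : choiceType) (B Q : {fset V}) (x : V)
  (p : seq V) : bool :=
  all (fun v => (v \in B) && (v \notin Q)) (belast x p) && (last x p \in Q).

Local Open Scope ereal_scope.

Definition hit_prob (R : realType) (V : choiceType) (adj : V -> seq V)
  (B Q : {fset V}) (x : V) : \bar R :=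
  \esum_(p in [set p : seq V | first_hit_path B Q x p])
     (path_weight R adj x p)%:E.

Local Close Scope ereal_scope.

(* IDLA with pausing, one particle: walk zeta from y, q = zeta(0..m) with
   q = y :: p, m = size p.  The stopping time is t_S /\ (t_T - 1).
   Case A: t_S = m <= t_T - 1 : zeta(0..m-1) in S, zeta(m) \notin S,
           zeta(0..m) in T; the particle settles at zeta(m).
   Case B: t_T - 1 = m - 1 < t_S : m > 0, zeta(0..m-1) in S and in T,
           zeta(m) \notin T; the particle settles at zeta(m-1).
   These finite paths index disjoint cylinder events whose union is the
   event {stopping time finite}. *)
Definition idla_outcome (V : choiceType) (S T : {fset V}) (y : V)
  (p : seq V) : option V :=
  let q := y :: p in
  let m := size p in
  if all (fun v => v \in S) (take m q) && (nth y q m \notin S)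
     && all (fun v => v \in T) q
  then Some (nth y q m)
  else if (0 < m)%N && all (fun v => (v \in S) && (v \in T)) (take m q)
          && (nth y q m \notin T)
  then Some (nth y q m.-1)
  else None.

Local Open Scope ereal_scope.

(* Law of A(S; y |-> T) as a function of the resulting set S'.  On the event
   (of probability 0 unless S is the whole, finite, graph) that the walk never
   stops, the result S u {zeta(oo)} is taken to be S. *)
Definition idla_step (R : realType) (V : choiceType) (adj : V -> seq V)
  (S T : {fset V}) (y : V) (S' : {fset V}) : \bar R :=
  \esum_(p in [set p : seq V | exists z, idla_outcome S T y p = Some z
                                        /\ S' = (z |` S)%fset])
     (path_weight R adj y p)%:E
  + (if S' == S then
       1 - \esum_(p in [set p : seq V | idla_outcome S T y p != None])
             (path_weight R adj y p)%:E
     else 0).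

(* Law of A_k(x |-> T) = A(emptyset; x, ..., x |-> T) (k copies of x),
   with independent walks. *)
Fixpoint idla_law (R : realType) (V : choiceType) (adj : V -> seq V)
  (T : {fset V}) (x : V) (k : nat) : {fset V} -> \bar R :=
  match k with
  | 0 => fun S => (S == fset0)%:R%:E
  | k'.+1 => fun S' =>
      \esum_(S in [set: {fset V}])
        (idla_law R adj T x k' S * idla_step R adj S T x S')
  end.

Definition idla_cover_prob (R : realType) (V : choiceType) (adj : V -> seq V)
  (B : {fset V}) (x : V) (t : nat) : \bar R :=
  \esum_(S in [set S : {fset V} | fsubset B S]) idla_law R adj B x t S.

(* Adding a particle to an aggregate [S] raises the number [occupied Q S] of
   vertices of [Q] in [S] by at most one, and only when the particle settles on
   a fresh vertex of [Q]. It then never left [B] before reaching that vertex,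
   so its path extends a path of the stopped walk that hits [Q]. The paths of
   one particle form a prefix-free family, hence the expected increase is at
   most the hitting probability, and after [t] particles the expected number of
   occupied vertices of [Q] is at most [t] times it. On the event
   [B \subset A_t(x |-> B)] that number is [#|Q|]. *)

From HB Require Import structures.
From mathcomp Require Import all_boot all_order all_algebra.
From mathcomp Require Import finmap.
From mathcomp Require Import all_classical all_reals all_analysis.
From mathcomp Require Import ring.

Import Order.TTheory GRing.Theory Num.Theory.
Local Open Scope classical_set_scope.
Local Open Scope ring_scope.

Set Implicit Arguments.
Unset Strict Implicit.
Unset Printing Implicit Defensive.

Lemma big_partition_undup (R : Type) (idx : R) (op : Monoid.com_law idx)
    (T K : eqType) (h : T -> K) (s : seq T) (f : T -> R) :
  \big[op/idx]_(p <- s) f p =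
  \big[op/idx]_(v <- undup (map h s)) \big[op/idx]_(p <- s | h p == v) f p.
Proof.
under [RHS]eq_bigr do rewrite big_mkcond.
rewrite exchange_big /=; apply: eq_big_seq => p ps.
have hs : h p \in undup (map h s) by rewrite mem_undup map_f.
rewrite (big_rem _ hs) /= eqxx big1_seq ?Monoid.mulm1 // => v /andP[_ vr].
case: eqP => // hpv; move: vr; rewrite -hpv.
by rewrite (mem_rem_uniq _ (undup_uniq _)) inE eqxx.
Qed.

Lemma seq_cover (T : eqType) (H : set T) (rel : T -> T -> Prop) (s : seq T) :
  (forall p, p \in s -> exists2 r, H r & rel r p) ->
  exists c : seq T, (forall r, r \in c -> H r) /\
    (forall p, p \in s -> exists2 r, r \in c & rel r p).
Proof.
elim: s => [|p s IH] covs; first by exists [::].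
case: IH => [q qs|c [cH covc]]; first by apply: covs; rewrite inE qs orbT.
have [r Hr prp] := covs p (mem_head _ _).
exists (r :: c); split=> [r'|q]; first by rewrite inE => /orP[/eqP ->|/cH].
rewrite inE => /orP[/eqP ->|/covc [r' r'c prq]].
  by exists r; rewrite ?mem_head.
by exists r'; rewrite // inE r'c orbT.
Qed.

Lemma take_size_cons (T : Type) (y : T) (p : seq T) :
  take (size p) (y :: p) = belast y p.
Proof. by rewrite lastI -cats1 take_size_cat ?size_belast. Qed.

Lemma nth_size_cons (T : Type) (y : T) (p : seq T) :
  nth y (y :: p) (size p) = last y p.
Proof. by rewrite -[RHS]/(last y (y :: p)) -nth_last. Qed.

Section esum_nonneg.
Variable R : realType.
Local Open Scope ereal_scope.

Lemma le01_EFin (e : \bar R) : 0 <= e -> e <= 1 ->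
  exists r : R, e = r%:E /\ (0 <= r <= 1)%R.
Proof.
move=> e0 e1; have ef : e \is a fin_num.
  by rewrite ge0_fin_numE // (le_lt_trans e1) // ltry.
by exists (fine e); rewrite fineK // -!lee_fin fineK // e0 e1.
Qed.

Lemma esumZr (T : choiceType) (I : set T) (a : T -> \bar R) (c : R) :
  (forall i, I i -> 0 <= a i) -> (0 <= c)%R ->
  \esum_(i in I) (a i * c%:E) = (\esum_(i in I) a i) * c%:E.
Proof.
move=> a0 c0; have [->|cpos] := eqVneq c 0%R.
  by rewrite mule0 esum1 // => i _; rewrite mule0.
have cgt : (0 < c)%R by rewrite lt_def cpos c0.
have sumZr (X : set T) : finite_set X -> X `<=` I ->
    \sum_(i \in X) (a i * c%:E) = (\sum_(i \in X) a i) * c%:E.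
  move=> finX XI; rewrite !fsbig_finite // big_seq [in RHS]big_seq.
  by rewrite ge0_sume_distrl // => i; rewrite in_fset_set // inE => /XI /a0.
apply/eqP; rewrite eq_le; apply/andP; split.
  apply: ge_ereal_sup => _ [X [finX XI] <-]; rewrite sumZr //.
  by rewrite lee_wpmul2r ?lee_fin // ereal_sup_ubound //; exists X.
rewrite -lee_pdivlMr // ge_ereal_sup // => _ [X [finX XI] <-].
rewrite lee_pdivlMr // -sumZr // ereal_sup_ubound //; exists X => //.
Qed.

Lemma esumZl (T : choiceType) (I : set T) (a : T -> \bar R) (x : \bar R) :
  (forall i, I i -> 0 <= a i) -> 0 <= x -> x \is a fin_num ->
  \esum_(i in I) (x * a i) = x * \esum_(i in I) a i.
Proof.
move=> a0 x0 xf; rewrite -(fineK xf) muleC -esumZr //; last first.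
  by rewrite -lee_fin fineK.
by apply: eq_esum => i _; rewrite muleC.
Qed.

Lemma esum_exchange (T1 T2 : choiceType) (a : T1 -> T2 -> \bar R) :
  (forall i j, 0 <= a i j) ->
  \esum_(i in [set: T1]) \esum_(j in [set: T2]) a i j =
  \esum_(j in [set: T2]) \esum_(i in [set: T1]) a i j.
Proof.
move=> a0; rewrite !(@esum_esum _ _ _ setT (fun=> setT)) //.
rewrite (reindex_esum ([set: T2] `*`` (fun=> [set: T1])) _
  (fun x => (x.2, x.1))) //.
split=> //= [[i1 i2] [j1 j2] _ _ [-> ->] //|[i1 i2] _].
by exists (i2, i1).
Qed.

Lemma esum_subset (T : choiceType) (I J : set T) (a : T -> \bar R) :
  I `<=` J -> (forall i, J i -> 0 <= a i) ->
  \esum_(i in I) a i <= \esum_(i in J) a i.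
Proof.
move=> IJ a0; apply: ge_ereal_sup => _ [X [finX XI] <-].
by apply: ereal_sup_ubound; exists X => //; split => // i /XI /IJ.
Qed.

Lemma esum_delta (T : choiceType) (t : T) (v : \bar R) : 0 <= v ->
  \esum_(i in [set: T]) (if i == t then v else 0) = v.
Proof.
move=> v0; rewrite -[RHS](@esum_set1 _ _ t (fun=> v)) // (esum_mkcond [set t]).
by apply: eq_esum => i _; rewrite in_set1.
Qed.

End esum_nonneg.

Definition prefix_free (T : eqType) (F : set (seq T)) : Prop :=
  forall p q, F p -> F q -> prefix p q -> p = q.

Lemma prefix_free_nil (T : eqType) (F : seq (seq T)) :
  uniq F -> prefix_free [set` F] -> [::] \in F -> perm_eq F [:: [::]].
Proof.
move=> uF pfF nilF; apply: uniq_perm => // p; rewrite inE.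
by apply/idP/eqP => [pF|->//]; rewrite (pfF [::] p) ?prefix0s.
Qed.

(* [branch y v F]: the tails of the paths of [F] whose first step goes to
   [v]; the default [y] of [head] only matters for [[::] \in F]. *)
Definition branch (T : eqType) (y v : T) (F : seq (seq T)) : seq (seq T) :=
  [seq behead p | p <- F & head y p == v].

Section branch.
Variables (T : eqType) (y v : T) (F : seq (seq T)).
Hypothesis nilNF : [::] \notin F.

Lemma mem_branch s : s \in branch y v F -> v :: s \in F.
Proof.
case/mapP=> [[|a p]]; rewrite mem_filter => /andP[/eqP hp pF] ->.
  by case/negP: nilNF.
by rewrite -hp.
Qed.

Lemma branch_uniq : uniq F -> uniq (branch y v F).
Proof.
move=> uF; rewrite map_inj_in_uniq ?filter_uniq // => p q.
rewrite !mem_filter => /andP[/eqP hp pF] /andP[/eqP hq qF].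
case: p hp pF => [|a p] hp pF; first by case/negP: nilNF.
case: q hq qF => [|b q] hq qF; first by case/negP: nilNF.
by rewrite /= in hp hq *; rewrite hp hq => ->.
Qed.

Lemma branch_prefix_free :
  prefix_free [set` F] -> prefix_free [set` branch y v F].
Proof.
move=> pfF s t /mem_branch sF /mem_branch tF pst.
by have := pfF _ _ sF tF; rewrite prefix_cons eqxx pst => /(_ isT) [->].
Qed.
End branch.

Section prefix_free_weight.
Variables (R : realType) (V : choiceType) (adj : V -> seq V).
Local Notation w := (path_weight R adj).
Local Notation srw := (srw_step R adj).

Lemma srw_step_ge0 u v : 0 <= srw u v.
Proof. by rewrite /srw_step; case: ifP; rewrite ?invr_ge0. Qed.

Lemma path_weight_ge0 y p : 0 <= w y p.
Proof. by elim: p y => [|v p IH] y //=; rewrite mulr_ge0 ?srw_step_ge0. Qed.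

Lemma path_weight_cat y p s : w y (p ++ s) = w y p * w (last y p) s.
Proof. by elim: p y => [|v p IH] y /=; rewrite ?mul1r // IH mulrA. Qed.

Lemma sum_srw_step_le1 y (K : seq V) : uniq K -> \sum_(v <- K) srw y v <= 1.
Proof.
move=> uK; rewrite /srw_step -big_mkcond /= big_const_seq /=.
set n := size (adj y); set c := count _ K.
have cn : (c <= n)%N.
  rewrite /c -size_filter uniq_leq_size ?filter_uniq // => v.
  by rewrite mem_filter => /andP[].
have -> : iter c (+%R n%:R^-1) 0 = n%:R^-1 *+ c :> R.
  by elim: (c) => [|k IH] //=; rewrite IH mulrS.
have [->|n0] := posnP n; first by rewrite invr0 mul0rn.
by rewrite -(mulr_natr n%:R^-1) mulrC ler_pdivrMr ?ltr0n // mul1r ler_nat.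
Qed.

Lemma sum_path_weight_branch y (F : seq (seq V)) : [::] \notin F ->
  \sum_(p <- F) w y p =
  \sum_(v <- undup (map (head y) F)) srw y v * \sum_(s <- branch y v F) w v s.
Proof.
move=> nilNF; rewrite (big_partition_undup _ (head y)); apply: eq_bigr => v _.
rewrite big_map big_filter big_distrr /= big_seq_cond [RHS]big_seq_cond.
apply: eq_bigr => -[|u p] /andP[pF /eqP hp]; first by case/negP: nilNF.
by rewrite /= -hp.
Qed.

Lemma prefix_free_weight_le1 y (F : seq (seq V)) :
  uniq F -> prefix_free [set` F] -> \sum_(p <- F) w y p <= 1.
Proof.
move=> uF pfF; set n := \max_(q <- F) size q.
have Fn : {in F, forall p, (size p <= n)%N}.
  by move=> p pF; apply: (@leq_bigmax_seq _ _ xpredT (fun q => size q)).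
clearbody n; elim: n y F uF pfF Fn => [|n IHn] y F uF pfF Fn.
all: have [nilF|nilNF] := boolP ([::] \in F).
all: try by rewrite (perm_big _ (prefix_free_nil uF pfF nilF)) big_seq1.
  rewrite big_seq big1 ?ler01 // => p pF; move: (Fn p pF).
  by rewrite leqn0 size_eq0 => /eqP p0; rewrite -p0 pF in nilNF.
rewrite sum_path_weight_branch //.
apply: le_trans (sum_srw_step_le1 y (undup_uniq _)).
apply: ler_sum => v _; rewrite -[leRHS]mulr1 ler_wpM2l ?srw_step_ge0 //.
apply: IHn; [exact: branch_uniq | exact: branch_prefix_free |].
by move=> s /(mem_branch nilNF) /Fn.
Qed.

Lemma sum_path_weight_extensions_le y r (F : seq (seq V)) :
  uniq F -> prefix_free [set` F] -> \sum_(p <- F | prefix r p) w y p <= w y r.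
Proof.
move=> uF pfF; set G := [seq drop (size r) p | p <- F & prefix r p].
have -> : \sum_(p <- F | prefix r p) w y p = w y r * \sum_(s <- G) w (last y r) s.
  rewrite big_map big_filter big_distrr /=; apply: eq_bigr => p /prefixP[s ->].
  by rewrite path_weight_cat drop_size_cat.
rewrite -[leRHS]mulr1 ler_wpM2l ?path_weight_ge0 //.
have dropK p : p \in [seq p <- F | prefix r p] -> r ++ drop (size r) p = p.
  by rewrite mem_filter => /andP[/prefixP[s ->] _]; rewrite drop_size_cat.
apply: prefix_free_weight_le1.
  rewrite map_inj_in_uniq ?filter_uniq // => p q pF qF eqd.
  by rewrite -(dropK p) // -(dropK q) // eqd.
move=> _ _ /mapP[p pf ->] /mapP[q qf ->] pre.
have [pF qF] : p \in F /\ q \in F.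
  by move: pf qf; rewrite !mem_filter => /andP[_ ->] /andP[_ ->].
suff -> : p = q by [].
by apply: pfF => //=; rewrite -(dropK p) // -(dropK q) // prefix_catr // eqxx.
Qed.

Lemma sum_path_weight_prefix_cover y (F H : seq (seq V)) :
  uniq F -> prefix_free [set` F] ->
  (forall p, p \in F -> exists2 r, r \in H & prefix r p) ->
  \sum_(p <- F) w y p <= \sum_(r <- H) w y r.
Proof.
move=> uF pfF covF.
apply: (@le_trans _ _ (\sum_(r <- H) \sum_(p <- F | prefix r p) w y p)); last first.
  by apply: ler_sum => r _; apply: sum_path_weight_extensions_le.
under [leRHS]eq_bigr do rewrite big_mkcond.
rewrite exchange_big /= big_seq [leRHS]big_seq; apply: ler_sum => p pF.
have [r rH prp] := covF p pF.
rewrite (big_rem r rH) /= prp lerDl sumr_ge0 // => r' _.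
by case: ifP; rewrite ?path_weight_ge0.
Qed.

Local Open Scope ereal_scope.

Lemma esum_path_weight_prefix_cover y (F H : set (seq V)) : prefix_free F ->
  (forall p, F p -> exists2 r, H r & prefix r p) ->
  \esum_(p in F) (w y p)%:E <= \esum_(r in H) (w y r)%:E.
Proof.
move=> pfF covF; apply: ge_ereal_sup => _ [X [finX XF] <-].
rewrite fsbig_finite // sumEFin.
have XFl p : p \in fset_set X -> F p by rewrite in_fset_set // inE => /XF.
have [c [cH covc]] := seq_cover (fun p pX => covF p (XFl p pX)).
apply: (@le_trans _ _ (\sum_(r <- undup c) w y r)%:E).
  rewrite lee_fin; apply: sum_path_weight_prefix_cover => [||p /covc[r rc prp]].
  - exact: fset_uniq.
  - by move=> p q /XFl pF /XFl qF; apply: pfF.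
  - by exists r; rewrite ?mem_undup.
rewrite -sumEFin; apply: esum_ge; exists [set` undup c].
  by split=> [|r /=]; [exact: finite_seq | rewrite mem_undup => /cH].
by rewrite fsbig_seq ?undup_uniq.
Qed.

Lemma esum_path_weight_prefix_free_le1 y (F : set (seq V)) :
  prefix_free F -> \esum_(p in F) (w y p)%:E <= 1.
Proof.
move=> pfF; apply: le_trans (@esum_path_weight_prefix_cover y F [set [::]] pfF _) _.
  by move=> p _; exists [::]; rewrite ?prefix0s.
by rewrite esum_set1 ?lee_fin ?path_weight_ge0.
Qed.

End prefix_free_weight.

Section idla_outcome.
Variable V : choiceType.
Implicit Types (S T B Q : {fset V}) (y z : V) (p : seq V).

Lemma idla_outcome_stopped S T y p : idla_outcome S T y p != None ->
  all (fun v => (v \in S) && (v \in T)) (belast y p) &&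
  ((last y p \notin S) || (last y p \notin T)).
Proof.
rewrite /idla_outcome take_size_cons nth_size_cons.
case: ifP => [/andP[/andP[inS outS] inT] _|_]; last first.
  by case: ifP => // /andP[/andP[_ ->] ->]; rewrite orbT.
rewrite outS andbT; apply/allP => v vb.
by rewrite (allP inS v vb) (allP inT v (mem_belast vb)).
Qed.

Lemma idla_outcome_prefix_free S T y :
  prefix_free [set p | idla_outcome S T y p != None].
Proof.
move=> p q + + /prefixP[[|b s] qE]; rewrite qE ?cats0 //.
move=> /idla_outcome_stopped/andP[_ exits] /idla_outcome_stopped/andP[inside _].
move: inside; rewrite belast_cat /= all_cat /= => /and3P[_ /andP[inS inT] _].
by move: exits; rewrite inS inT.
Qed.

Lemma idla_outcome_new S T y p z : idla_outcome S T y p = Some z -> z \notin S ->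
  all (fun v => v \in T) (y :: p) /\ z = last y p.
Proof.
rewrite /idla_outcome take_size_cons nth_size_cons.
case: ifP => [/andP[_ inT] [<-] //|_].
case: ifP => // /andP[/andP[p0 inST] _] [<-] zNS; exfalso.
have lt : ((size p).-1 < size p)%N by rewrite ltn_predL.
have zb : nth y (y :: p) (size p).-1 \in belast y p.
  by rewrite -(nth_take _ lt) take_size_cons mem_nth // size_belast.
by move/allP: inST => /(_ _ zb) /andP[zS _]; rewrite zS in zNS.
Qed.

Lemma first_hit_path_prefix_free B Q y :
  prefix_free [set p | first_hit_path B Q y p].
Proof.
move=> r q + + /prefixP[[|b s] qE]; rewrite qE ?cats0 //.
move=> /andP[_ lastQ] /andP[+ _].
rewrite belast_cat /= all_cat /= => /and3P[_ /andP[_]].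
by rewrite lastQ.
Qed.

Lemma first_hit_path_prefix B Q y p :
  all (fun v => v \in B) (y :: p) -> last y p \in Q ->
  exists2 r, first_hit_path B Q y r & prefix r p.
Proof.
move=> inB lastQ; set q := y :: p.
have hasQ : has (fun v => v \in Q) q.
  by apply/hasP; exists (last y p); rewrite ?mem_last.
set i := find (fun v => v \in Q) q.
have iq : (i < size q)%N by rewrite -has_find.
exists (take i p); last exact: prefix_take.
have : y :: take i p = rcons (take i q) (nth y q i) by rewrite -take_nth.
have iQ : nth y q i \in Q := nth_find y hasQ.
rewrite /first_hit_path lastI => /rcons_inj[-> ->]; rewrite iQ andbT.
apply/(all_nthP y) => j; rewrite size_take iq => ji.
rewrite nth_take // (before_find _ ji) andbT.
by move/(all_nthP y): inB; apply; apply: ltn_trans iq.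
Qed.

End idla_outcome.

Definition expectation (R : realType) (V : choiceType) (mu : {fset V} -> \bar R)
    (phi : {fset V} -> R) : \bar R :=
  (\esum_(S in [set: {fset V}]) mu S * (phi S)%:E)%E.

Section idla_step.
Variables (R : realType) (V : choiceType) (adj : V -> seq V).
Variables (B : {fset V}) (y : V).
Local Notation w := (path_weight R adj).
Local Notation step S := (idla_step R adj S B y).
Local Open Scope ereal_scope.

Definition stop_paths (S : {fset V}) : set (seq V) :=
  [set p | idla_outcome S B y p != None].

Definition stop_prob (S : {fset V}) : \bar R :=
  \esum_(p in stop_paths S) (w y p)%:E.

Lemma stop_prob_ge0 S : 0 <= stop_prob S.
Proof. by apply: esum_ge0 => p _; rewrite lee_fin path_weight_ge0. Qed.

Lemma stop_prob_le1 S : stop_prob S <= 1.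
Proof. exact/esum_path_weight_prefix_free_le1/idla_outcome_prefix_free. Qed.

Definition settle_prob (S S' : {fset V}) : \bar R :=
  \esum_(p in [set p | exists z,
            idla_outcome S B y p = Some z /\ S' = (z |` S)%fset])
     (w y p)%:E.

Lemma idla_stepE S S' :
  step S S' = settle_prob S S' + (if S' == S then 1 - stop_prob S else 0).
Proof. by []. Qed.

Lemma settle_prob_ge0 S S' : 0 <= settle_prob S S'.
Proof. by apply: esum_ge0 => p _; rewrite lee_fin path_weight_ge0. Qed.

Lemma unstopped_prob_ge0 S : 0 <= 1 - stop_prob S.
Proof.
have [r [-> /andP[_ r1]]] := le01_EFin (stop_prob_ge0 S) (stop_prob_le1 S).
by rewrite -EFinB lee_fin subr_ge0.
Qed.

Lemma idla_step_ge0 S S' : 0 <= step S S'.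
Proof.
rewrite idla_stepE adde_ge0 ?settle_prob_ge0 //.
by case: ifP; rewrite ?unstopped_prob_ge0.
Qed.

Lemma idla_step_expectation S (phi : {fset V} -> R) : (forall S, 0 <= phi S)%R ->
  expectation (step S) phi =
  \esum_(p in stop_paths S)
    (w y p * phi (odflt y (idla_outcome S B y p) |` S)%fset)%:E
  + (1 - stop_prob S) * (phi S)%:E.
Proof.
move=> phi0; rewrite /expectation.
rewrite (@eq_esum _ _ _ _ (fun S' => settle_prob S S' * (phi S')%:E +
   (if S' == S then 1 - stop_prob S else 0) * (phi S')%:E)); last first.
  move=> S' _; rewrite idla_stepE ge0_muleDl ?settle_prob_ge0 //.
  by case: ifP; rewrite ?unstopped_prob_ge0.
have settle_ge0 S' : 0 <= settle_prob S S' * (phi S')%:E.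
  by rewrite mule_ge0 ?settle_prob_ge0 ?lee_fin.
have stay_ge0 S' : 0 <= (if S' == S then 1 - stop_prob S else 0) * (phi S')%:E.
  by case: ifP; rewrite ?mul0e // mule_ge0 ?unstopped_prob_ge0 ?lee_fin.
rewrite (esumD (fun S' _ => settle_ge0 S') (fun S' _ => stay_ge0 S')).
congr (_ + _).
- transitivity (\esum_(S' in [set: {fset V}]) \esum_(p in [set p | exists z,
     idla_outcome S B y p = Some z /\ S' = (z |` S)%fset]) (w y p * phi S')%:E).
    apply: eq_esum => S' _; rewrite -esumZr //.
    by move=> p _; rewrite lee_fin path_weight_ge0.
  rewrite esum_esum => [|S' p _ _]; last first.
    by rewrite lee_fin mulr_ge0 ?path_weight_ge0.
  rewrite (reindex_esum (stop_paths S) _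
     (fun p => ((odflt y (idla_outcome S B y p) |` S)%fset, p))) //.
  split=> [p|p q _ _ [_ ->] //|[S' p] /= [_ [z [Ez ES]]]].
  + rewrite /stop_paths /=; case: (idla_outcome S B y p) => [z|] //= _.
    by split => //; exists z.
  + by exists p; rewrite /stop_paths /= ?Ez ?ES.
- rewrite -[RHS](@esum_delta R _ S); last by have := stay_ge0 S; rewrite eqxx.
  by apply: eq_esum => S' _; case: eqP => [->|]; rewrite ?mul0e.
Qed.

Lemma idla_step_mass_le1 S : expectation (step S) (fun=> 1%R) <= 1.
Proof.
rewrite idla_step_expectation // mule1.
rewrite (eq_esum (fun p _ => congr1 EFin (mulr1 (w y p)))) -/(stop_prob S).
have [r [-> _]] := le01_EFin (stop_prob_ge0 S) (stop_prob_le1 S).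
by rewrite -EFinB -EFinD lee_fin addrC subrK.
Qed.

End idla_step.

Definition occupied {R : realType} {V : choiceType} (Q S : {fset V}) : R :=
  (#|` (S `&` Q)%fset|)%:R.

Lemma occupied_ge0 {R : realType} {V : choiceType} (Q S : {fset V}) :
  (0 <= occupied Q S :> R)%R.
Proof. exact: ler0n. Qed.

Lemma cardfsU1I (V : choiceType) (Q S : {fset V}) z :
  (#|` ((z |` S) `&` Q)%fset| <=
     #|` (S `&` Q)%fset| + ((z \in Q) && (z \notin S)))%N.
Proof.
case zQ: (z \in Q).
  have -> : ((z |` S) `&` Q)%fset = (z |` (S `&` Q))%fset.
    by apply/fsetP => v; rewrite !inE; case: (eqVneq v z) => [->|] //=; rewrite ?zQ.
  by rewrite cardfsU1 !inE zQ andbT addnC.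
have -> : ((z |` S) `&` Q)%fset = (S `&` Q)%fset.
  apply/fsetP => v; rewrite !inE.
  by case: (eqVneq v z) => [->|] //=; rewrite ?zQ ?andbF.
by rewrite leq_addr.
Qed.

Section idla_step_occupied.
Variables (R : realType) (V : choiceType) (adj : V -> seq V).
Variables (Q B : {fset V}) (y : V).
Local Notation w := (path_weight R adj).
Local Notation step S := (idla_step R adj S B y).
Local Notation hit := (hit_prob R adj B Q y).
Local Open Scope ereal_scope.

Lemma hit_prob_ge0 : 0 <= hit.
Proof. by apply: esum_ge0 => p _; rewrite lee_fin path_weight_ge0. Qed.

Lemma hit_prob_le1 : hit <= 1.
Proof. exact/esum_path_weight_prefix_free_le1/first_hit_path_prefix_free. Qed.

Definition new_hit_paths (S : {fset V}) : set (seq V) :=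
  [set p | exists z, idla_outcome S B y p = Some z /\ z \in Q /\ z \notin S].

Lemma new_hit_prob_le S :
  \esum_(p in stop_paths B y S `&` new_hit_paths S) (w y p)%:E <= hit.
Proof.
apply: esum_path_weight_prefix_cover => [p q [pS _] [qS _]|p [_ [z [pz [zQ zS]]]]].
  exact: (idla_outcome_prefix_free pS qS).
have [inB zE] := idla_outcome_new pz zS.
by apply: first_hit_path_prefix inB _; rewrite -zE.
Qed.

Lemma idla_step_expect_occupied S :
  expectation (step S) (occupied Q) <= (occupied Q S)%:E + hit.
Proof.
rewrite idla_step_expectation; last exact: occupied_ge0.
have h1 : \esum_(p in stop_paths B y S)
   (w y p * occupied Q (odflt y (idla_outcome S B y p) |` S)%fset)%:E <=
   \esum_(p in stop_paths B y S) ((w y p)%:E * (occupied Q S)%:E +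
     (if p \in new_hit_paths S then (w y p)%:E else 0)).
  apply: le_esum => p; rewrite /stop_paths /=.
  case E: (idla_outcome S B y p) => [z|] //= _.
  apply: (@le_trans _ _
    ((w y p * (occupied Q S + ((z \in Q) && (z \notin S))%:R))%:E)).
    rewrite lee_fin ler_wpM2l ?path_weight_ge0 //.
    by rewrite /occupied -natrD ler_nat cardfsU1I.
  rewrite mulrDr EFinD EFinM leeD2l //.
  case: (boolP ((z \in Q) && (z \notin S))) => [/andP[zQ zS]|nz].
    by rewrite mem_set ?mulr1 //; exists z.
  by rewrite mulr0; case: ifP; rewrite // lee_fin path_weight_ge0.
apply: (le_trans (leeD2r _ h1)).
have w0 p : 0 <= (w y p)%:E by rewrite lee_fin path_weight_ge0.
have new0 p : 0 <= (if p \in new_hit_paths S then (w y p)%:E else 0).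
  by case: ifP.
have occ0 : 0 <= (occupied Q S : R)%:E by rewrite lee_fin occupied_ge0.
rewrite (esumD (fun p _ => mule_ge0 (w0 p) occ0) (fun p _ => new0 p)).
rewrite (esumZr (fun p _ => w0 p) (occupied_ge0 Q S)).
rewrite -/(stop_prob R adj B y S) -esum_mkcondr.
have [pr [-> _]] :=
  le01_EFin (stop_prob_ge0 R adj B y S) (stop_prob_le1 R adj B y S).
have [hr [hE _]] := le01_EFin hit_prob_ge0 hit_prob_le1.
have := new_hit_prob_le S; rewrite hE => hG.
apply: (@le_trans _ _
  ((pr * occupied Q S)%:E + hr%:E + ((1 - pr) * occupied Q S)%:E)).
  by rewrite -EFinB; apply: leeD2r; apply: leeD2l.
rewrite -!EFinD lee_fin.
have -> : (pr * occupied Q S + hr + (1 - pr) * occupied Q S = occupied Q S + hr)%R.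
  by ring.
by [].
Qed.

End idla_step_occupied.

Section expectation.
Variables (R : realType) (V : choiceType) (mu : {fset V} -> \bar R).
Hypothesis mu_ge0 : forall S, (0 <= mu S)%E.
Local Open Scope ereal_scope.

Lemma expectation_cst1 :
  expectation mu (fun=> 1%R) = \esum_(S in [set: {fset V}]) mu S.
Proof. by apply: eq_esum => S _; rewrite mule1. Qed.

Lemma expectation1_fin_num S :
  expectation mu (fun=> 1%R) <= 1 -> mu S \is a fin_num.
Proof.
rewrite expectation_cst1 => mass.
rewrite ge0_fin_numE // (@le_lt_trans _ _ 1) ?ltry //.
by apply: le_trans mass; rewrite -(esum_set1 (mu_ge0 S)) esum_subset.
Qed.

Lemma cover_mass_le_expect_occupied (Q B : {fset V}) : fsubset Q B ->
  (\esum_(S in [set S | fsubset B S]) mu S) * (#|` Q|%:R)%:E <=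
  expectation mu (occupied Q).
Proof.
move=> QB; rewrite -(esumZr (fun S _ => mu_ge0 S) (ler0n _ _)) /expectation.
apply: (@le_trans _ _
  (\esum_(S in [set S | fsubset B S]) mu S * (occupied Q S)%:E)).
  apply: le_esum => S BS; rewrite /occupied (fsetIidPr _) //.
  exact: fsubset_trans BS.
by apply: esum_subset => // S _; rewrite mule_ge0 ?lee_fin ?occupied_ge0.
Qed.

End expectation.

Section idla_law.
Variables (R : realType) (V : choiceType) (adj : V -> seq V).
Variables (B : {fset V}) (y : V).
Local Notation law := (idla_law R adj B y).
Local Notation step S := (idla_step R adj S B y).
Local Open Scope ereal_scope.

Lemma idla_law_ge0 k S : 0 <= law k S.
Proof.
elim: k S => [|k IHk] S /=; first by rewrite lee_fin ler0n.
by apply: esum_ge0 => S' _; rewrite mule_ge0 ?idla_step_ge0.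
Qed.

Lemma idla_law_succ_expectation k (phi : {fset V} -> R) :
  (forall S, 0 <= phi S)%R -> (forall S, law k S \is a fin_num) ->
  expectation (law k.+1) phi =
  \esum_(S in [set: {fset V}]) law k S * expectation (step S) phi.
Proof.
move=> phi0 lawk_fin.
have phiE_ge0 S' : 0 <= (phi S')%:E by rewrite lee_fin.
have stepphi_ge0 S S' : 0 <= step S S' * (phi S')%:E.
  by rewrite mule_ge0 ?idla_step_ge0.
rewrite /expectation (@eq_esum _ _ _ _ (fun S' => \esum_(S in [set: {fset V}])
   (law k S * step S S' * (phi S')%:E))); last first.
  move=> S' _; rewrite /= -(esumZr _ (phi0 S')) // => S _.
  by rewrite mule_ge0 ?idla_law_ge0 ?idla_step_ge0.
rewrite esum_exchange => [|S S']; last by rewrite -muleA mule_ge0 ?idla_law_ge0.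
apply: eq_esum => S _; rewrite -(esumZl _ (idla_law_ge0 k S) (lawk_fin S)).
  by apply: eq_esum => S' _; rewrite muleA.
by move=> S' _; apply: stepphi_ge0.
Qed.

Lemma idla_law_mass_le1 k : expectation (law k) (fun=> 1%R) <= 1.
Proof.
elim: k => [|k IHk].
  rewrite expectation_cst1 -[leRHS](@esum_delta R _ (fset0 : {fset V}) 1) ?lee01 //.
  by apply: le_esum => S _ /=; case: eqP.
rewrite idla_law_succ_expectation //; last first.
  by move=> S; apply: (expectation1_fin_num (idla_law_ge0 k)).
apply: le_trans IHk; apply: le_esum => S _.
by rewrite lee_wpmul2l ?idla_law_ge0 ?idla_step_mass_le1.
Qed.

Lemma idla_law_fin_num k S : law k S \is a fin_num.
Proof. exact: (expectation1_fin_num (idla_law_ge0 k) _ (idla_law_mass_le1 k)). Qed.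

Lemma idla_cover_prob_ge0 t : 0 <= idla_cover_prob R adj B y t.
Proof. by apply: esum_ge0 => S _; apply: idla_law_ge0. Qed.

Lemma idla_cover_prob_le1 t : idla_cover_prob R adj B y t <= 1.
Proof.
apply: le_trans (idla_law_mass_le1 t); rewrite expectation_cst1.
by apply: esum_subset => // S _; apply: idla_law_ge0.
Qed.

Lemma idla_law_expect_occupied (Q : {fset V}) k :
  expectation (law k) (occupied Q) <= k%:R%:E * hit_prob R adj B Q y.
Proof.
have [h [hE /andP[h0 _]]] :=
  le01_EFin (hit_prob_ge0 R adj Q B y) (hit_prob_le1 R adj Q B y).
rewrite hE -EFinM; elim: k => [|k IHk].
  rewrite mul0r /expectation esum1 // => S _ /=; case: eqP => [->|_].
    by rewrite /occupied fset0I cardfs0 mule0.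
  by rewrite mul0e.
rewrite (idla_law_succ_expectation (occupied_ge0 Q) (idla_law_fin_num k)).
have lawocc_ge0 S : 0 <= law k S * (occupied Q S)%:E.
  by rewrite mule_ge0 ?idla_law_ge0 ?lee_fin ?occupied_ge0.
have lawh_ge0 S : 0 <= law k S * h%:E by rewrite mule_ge0 ?idla_law_ge0 ?lee_fin.
apply: (@le_trans _ _ (\esum_(S in [set: {fset V}])
          (law k S * (occupied Q S)%:E + law k S * h%:E))).
  apply: le_esum => S _; rewrite -ge0_muleDr ?lee_fin ?occupied_ge0 //.
  by rewrite lee_wpmul2l ?idla_law_ge0 // -hE idla_step_expect_occupied.
rewrite (esumD (fun S _ => lawocc_ge0 S) (fun S _ => lawh_ge0 S)).
rewrite (esumZr (fun S _ => idla_law_ge0 k S) h0).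
have mass : \esum_(S in [set: {fset V}]) law k S <= 1.
  by rewrite -expectation_cst1 idla_law_mass_le1.
have [m [-> /andP[_ m1]]] :=
  le01_EFin (esum_ge0 (fun S _ => idla_law_ge0 k S)) mass.
apply: (@le_trans _ _ ((k%:R * h)%:E + (m * h)%:E)); first by rewrite leeD2r.
by rewrite -EFinD lee_fin mulrSr mulrDl mul1r lerD2l ler_piMl.
Qed.

End idla_law.

Theorem lemma3p1 (R : realType) (V : choiceType) (adj : V -> seq V)
  (Q B : {fset V}) (x : V) (t : nat) :
  simple_graph adj -> connected_graph adj ->
  fsubset Q B -> x \in B -> (0 < t)%N ->
  (idla_cover_prob R adj B x t * ((#|` Q|)%:R / t%:R)%:E
     <= hit_prob R adj B Q x)%E.
Proof.
move=> _ _ QB _ t0.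
have := le_trans (cover_mass_le_expect_occupied (idla_law_ge0 R adj B x t) QB)
  (idla_law_expect_occupied R adj B x Q t).
have [c [cE _]] := le01_EFin (idla_cover_prob_ge0 R adj B x t)
  (idla_cover_prob_le1 R adj B x t).
have [h [hE _]] := le01_EFin (hit_prob_ge0 R adj Q B x) (hit_prob_le1 R adj Q B x).
rewrite -/(idla_cover_prob R adj B x t) cE hE -!EFinM !lee_fin => key.
by rewrite mulrA ler_pdivrMr ?ltr0n // [leRHS]mulrC.
Qed.
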